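(* Let $f(x)=\frac1n\sum_{i=1}^n f_i(x)$ on $\mathbb{R}^d$, where each $f_i$ is convex and $L_i$-smooth (i.e. $\nabla f_i$ is $L_i$-Lipschitz) and lower bounded, and let $x^*$ be a minimizer of $f$. Consider SGD with the DecSPS stepsize (defined in the context) with a non-decreasing sequence $(c_k)_{k\ge0}$ satisfying $c_k\ge 1$ for all $k\in\mathbb{N}$. Then for every $K\ge1$, $$\mathbb{E}[f(\bar x^K)-f(x^* )]\le \frac{2c_{K-1}\tilde L D^2}{K}+\frac1K\sum_{k=0}^{K-1}\frac{\hat\sigma_B^2}{c_k},$$ where $D^2:=\max_{k\in[K-1]}\|x^k-x^*\|^2$, $\tilde L:=\max\{\max_i L_i,\ \frac{1}{2c_0\gamma_b}\}$, and $\bar x^K=\frac1K\sum_{k=0}^{K-1}x^k$.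
   Context: Minibatches: fix a batch size $B$; at each iteration $k$ a subset $\mathcal{S}_k\subseteq[n]$ with $|\mathcal{S}_k|=B$ is sampled uniformly at random, independently across iterations. For $\mathcal S\subseteq[n]$, $f_{\mathcal S}:=\frac1{|\mathcal S|}\sum_{i\in\mathcal S}f_i$, $f^*_{\mathcal S}:=\inf_x f_{\mathcal S}(x)$, and $\ell^*_{\mathcal S}$ is a given real number with $\ell^*_{\mathcal S}\le f^*_{\mathcal S}$. SGD: $x^{k+1}=x^k-\gamma_k\nabla f_{\mathcal S_k}(x^k)$ from a given $x^0$. DecSPS stepsize: $\gamma_k:=\frac{1}{c_k}\min\left\{\frac{f_{\mathcal S_k}(x^k)-\ell^*_{\mathcal S_k}}{\|\nabla f_{\mathcal S_k}(x^k)\|^2},\ c_{k-1}\gamma_{k-1}\right\}$ for $k\ge0$, with conventions $c_{-1}=c_0$ and $\gamma_{-1}=\gamma_b>0$ (a fixed constant); if $\nabla f_{\mathcal S_k}(x^k)=0$ the iterate is not updated. $\hat\sigma_B^2:=\mathbb{E}_{\mathcal S}[f_{\mathcal S}(x^* )-\ell^*_{\mathcal S}]=f(x^* )-\mathbb{E}_{\mathcal S}[\ell^*_{\mathcal S}]$, where $\mathcal S$ is uniform over subsets of size $B$. $[K-1]$ denotes the iteration indices $\{0,\dots,K-1\}$. *)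

From HB Require Import structures.
From mathcomp Require Import all_boot all_order all_algebra.
From mathcomp Require Import all_classical all_reals.
From mathcomp Require Import topology normedtype derive.
Set Implicit Arguments. Unset Strict Implicit. Unset Printing Implicit Defensive.
Import Order.TTheory GRing.Theory Num.Theory.
Import numFieldNormedType.Exports.
Local Open Scope ring_scope.

Section DecSPS.
Variables (R : realType) (d n : nat).
Notation vec := 'rV[R]_d.

Definition dotv (u v : vec) : R := \sum_(j < d) u 0 j * v 0 j.
Definition sqnorm (v : vec) : R := dotv v v.
Definition enorm (v : vec) : R := Num.sqrt (sqnorm v).

Definition is_gradient (f : vec -> R) (g : vec -> vec) : Prop :=
  forall x, differentiable f x /\ forall v, 'd f x v = dotv (g x) v.

Definition convex_fun (f : vec -> R) : Prop :=
  forall (x y : vec) (t : R), 0 <= t <= 1 ->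
    f (t *: x + (1 - t) *: y) <= t * f x + (1 - t) * f y.

Definition lipschitz_grad (g : vec -> vec) (L : R) : Prop :=
  forall x y, enorm (g x - g y) <= L * enorm (x - y).

Definition lower_bounded (f : vec -> R) : Prop := exists m, forall x, m <= f x.

Definition favg (fs : 'I_n -> vec -> R) (x : vec) : R :=
  n%:R^-1 * \sum_(i < n) fs i x.

Definition fS (fs : 'I_n -> vec -> R) (S : {set 'I_n}) (x : vec) : R :=
  #|S|%:R^-1 * \sum_(i in S) fs i x.
Definition gS (gs : 'I_n -> vec -> vec) (S : {set 'I_n}) (x : vec) : vec :=
  #|S|%:R^-1 *: \sum_(i in S) gs i x.

(* State = (x^k, gamma_{k-1}).  Convention c_{-1} = c_0
   (c k.-1 with k = 0), gamma_{-1} = gamma_b.  If the minibatch gradient is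
   zero the iterate is not updated and the Polyak term is read as +oo,
   i.e. gamma_k = c_{k-1} gamma_{k-1} / c_k. *)
Definition decsps_step (fs : 'I_n -> vec -> R) (gs : 'I_n -> vec -> vec)
  (lstar : {set 'I_n} -> R) (c : nat -> R) (k : nat) (S : {set 'I_n})
  (st : vec * R) : vec * R :=
  let x := st.1 in let gprev := st.2 in
  let gr := gS gs S x in
  if gr == 0 then (x, (c k)^-1 * (c k.-1 * gprev))
  else
    let gam := (c k)^-1 *
       Num.min ((fS fs S x - lstar S) / sqnorm gr) (c k.-1 * gprev) in
    (x - gam *: gr, gam).

Fixpoint decsps_state (fs : 'I_n -> vec -> R) (gs : 'I_n -> vec -> vec)
  (lstar : {set 'I_n} -> R) (c : nat -> R) (gamma_b : R) (x0 : vec)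
  (w : nat -> {set 'I_n}) (k : nat) : vec * R :=
  match k with
  | 0 => (x0, gamma_b)
  | k'.+1 => decsps_step fs gs lstar c k' (w k')
               (decsps_state fs gs lstar c gamma_b x0 w k')
  end.

Definition decsps_iter fs gs lstar c gamma_b x0 w k : vec :=
  (decsps_state fs gs lstar c gamma_b x0 w k).1.

Definition batch_ok (B : nat) (S : {set 'I_n}) : bool := #|S| == B.

Definition E_batch (B : nat) (X : {set 'I_n} -> R) : R :=
  (\sum_(S : {set 'I_n} | batch_ok B S) X S) / #|[pred S | batch_ok B S]|%:R.

(* expectation over K i.i.d. uniform minibatches S_0, ..., S_{K-1} of size B *)
Definition batch_seq_ok (B K : nat) (t : K.-tuple {set 'I_n}) : bool :=
  all (batch_ok B) t.
Definition E_seq (B K : nat) (X : K.-tuple {set 'I_n} -> R) : R :=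
  (\sum_(t : K.-tuple {set 'I_n} | batch_seq_ok B t) X t)
    / #|[pred t : K.-tuple {set 'I_n} | batch_seq_ok B t]|%:R.

Definition seq_of_tuple (K : nat) (t : K.-tuple {set 'I_n}) : nat -> {set 'I_n} :=
  fun k => nth (finset.set0 : {set 'I_n}) t k.

End DecSPS.

From HB Require Import structures.
From mathcomp Require Import all_boot all_order all_algebra.
From mathcomp Require Import all_classical all_reals.
From mathcomp Require Import topology normedtype derive.
From mathcomp Require Import perm ring lra.
Set Implicit Arguments. Unset Strict Implicit. Unset Printing Implicit Defensive.
Import Order.TTheory GRing.Theory Num.Theory.
Import numFieldNormedType.Exports.
Local Open Scope ring_scope.

(* Along every minibatch path the stepsizes gamma_k are positive and
   nonincreasing, and c_k gamma_k >= 1/(2 Ltil): by the descent lemma the Polyak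
   ratio (f_S(x) - l_S) / |grad f_S(x)|^2 is at least 1/(2 Ltil).  Convexity and
   the Polyak cap give gamma_k h_k <= |x_k - x_star|^2 - |x_(k+1) - x_star|^2 for
   the gain h_k = (2 - 1/c_k) (f_S(x_k) - f_S(x_star)) - (f_S(x_star) - l_S) / c_k
   with S = S_k, so telescoping with decreasing weights bounds sum_k h_k by
   D^2 / gamma_(K-1) <= 2 c_(K-1) Ltil D^2.  As x_k only depends on S_0, ...,
   S_(k-1), resampling S_k turns E[h_k] into (2 - 1/c_k) E[f(x_k) - f(x_star)] -
   sigma^2 / c_k, which dominates E[f(x_k) - f(x_star)] - sigma^2 / c_k; Jensen's
   inequality for the average iterate concludes. *)

Section EuclideanRowSpace.
Variables (R : realType) (d : nat).
Implicit Types (u v w : 'rV[R]_d) (a : R).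

Lemma dotvC u v : dotv u v = dotv v u.
Proof. by apply: eq_bigr => j _; rewrite mulrC. Qed.

Lemma dotvBl u v w : dotv (u - v) w = dotv u w - dotv v w.
Proof. by rewrite /dotv -sumrB; apply: eq_bigr => j _; rewrite !mxE mulrBl. Qed.

Lemma dotvZl a u v : dotv (a *: u) v = a * dotv u v.
Proof. by rewrite /dotv mulr_sumr; apply: eq_bigr => j _; rewrite mxE mulrA. Qed.

Lemma dotv0l v : dotv 0 v = 0.
Proof. by rewrite -(scale0r 0) dotvZl mul0r. Qed.

Lemma dotvBr u v w : dotv u (v - w) = dotv u v - dotv u w.
Proof. by rewrite !(dotvC u) dotvBl. Qed.

Lemma dotvZr a u v : dotv u (a *: v) = a * dotv u v.
Proof. by rewrite !(dotvC u) dotvZl. Qed.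

Lemma dotv_suml (I : finType) (P : pred I) (F : I -> 'rV[R]_d) v :
  dotv (\sum_(i | P i) F i) v = \sum_(i | P i) dotv (F i) v.
Proof.
rewrite /dotv exchange_big /=; apply: eq_bigr => j _.
by rewrite summxE mulr_suml.
Qed.

Lemma sqnorm_ge0 v : 0 <= sqnorm v.
Proof. by apply: sumr_ge0 => j _; rewrite -expr2 sqr_ge0. Qed.

Lemma sqnorm_eq0 v : (sqnorm v == 0) = (v == 0).
Proof.
apply/idP/eqP => [|->]; last by rewrite /sqnorm dotv0l.
rewrite psumr_eq0 => [/allP v0|j _]; last by rewrite -expr2 sqr_ge0.
apply/rowP => j; apply/eqP; rewrite mxE -sqrf_eq0 expr2.
exact: implyP (v0 j (mem_index_enum j)) isT.
Qed.

Lemma sqnorm_gt0 v : (0 < sqnorm v) = (v != 0).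
Proof. by rewrite lt_def sqnorm_eq0 sqnorm_ge0 andbT. Qed.

Lemma sqnormB u v : sqnorm (u - v) = sqnorm u - 2 * dotv u v + sqnorm v.
Proof. by rewrite /sqnorm dotvBl !dotvBr (dotvC v u); ring. Qed.

Lemma sqnormZ a v : sqnorm (a *: v) = a ^+ 2 * sqnorm v.
Proof. by rewrite /sqnorm dotvZl dotvZr mulrA expr2. Qed.

Lemma enorm_ge0 v : 0 <= enorm v.
Proof. exact: sqrtr_ge0. Qed.

Lemma sqr_enorm v : enorm v ^+ 2 = sqnorm v.
Proof. by rewrite sqr_sqrtr // sqnorm_ge0. Qed.

Lemma enormZ a v : 0 <= a -> enorm (a *: v) = a * enorm v.
Proof. by move=> a0; rewrite /enorm sqnormZ sqrtrM ?sqr_ge0 // sqrtr_sqr ger0_norm. Qed.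

Lemma dotv_le_enorm u v : dotv u v <= enorm u * enorm v.
Proof.
have [->|u0] := eqVneq u 0; first by rewrite dotv0l mulr_ge0 ?enorm_ge0.
have [->|v0] := eqVneq v 0; first by rewrite dotvC dotv0l mulr_ge0 ?enorm_ge0.
have uv0 : 0 < enorm u * enorm v by rewrite mulr_gt0 ?sqrtr_gt0 ?sqnorm_gt0.
have := sqnorm_ge0 (enorm v *: u - enorm u *: v).
rewrite sqnormB !sqnormZ dotvZl dotvZr -!sqr_enorm => h.
rewrite -subr_ge0 -(pmulr_rge0 _ uv0); lra.
Qed.

End EuclideanRowSpace.

Section SmoothConvex.
Variables (R : realType) (d : nat) (f : 'rV[R]_d -> R) (g : 'rV[R]_d -> 'rV[R]_d).
Hypothesis f_grad : is_gradient f g.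

Lemma is_derive_line (x v : 'rV[R]_d) (t : R) :
  is_derive t 1 (fun s : R => f (s *: v + x)) (dotv (g (t *: v + x)) v).
Proof.
have [df dfE] := f_grad (t *: v + x).
have quotE : (fun h : R => h^-1 *: (f ((h%:A + t) *: v + x) - f (t *: v + x))) =
             (fun h : R => h^-1 *: (f (h *: v + (t *: v + x)) - f (t *: v + x))).
  by apply: funext => h; rewrite scalerDl addrA [h%:A]mulr1.
apply: DeriveDef; rewrite /derivable /derive /= quotE.
  exact: diff_derivable.
by rewrite -/(derive f (t *: v + x) v) deriveE.
Qed.

Local Open Scope classical_set_scope.

Lemma convex_gradient_le : convex_fun f ->
  forall x y, f x + dotv (g x) (y - x) <= f y.
Proof.
move=> f_cvx x y; set v := y - x.
have [der derE] := is_derive_line x v 0.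
rewrite scale0r add0r in derE.
rewrite addrC -lerBrDr -derE.
move: der; rewrite /derivable /derive => der.
(* by convexity, the difference quotients from the right at 0 are at most f y - f x *)
have right_of_dnbhs (P : set R) : (0 : R)^' P -> (0 : R)^'+ P.
  by rewrite /dnbhs /within /=; apply: filterS => h Ph h0; apply: Ph; rewrite gt_eqF.
apply: (cvgr_to_le (cvg_trans (fun P => right_of_dnbhs _) der)).
near=> h.
have h0 : 0 < h by near: h; exact: nbhs_right_gt.
have h1 : h < 1 by near: h; exact: nbhs_right_lt.
have chordE : h *: v + x = h *: y + (1 - h) *: x.
  by rewrite /v scalerBr scalerBl scale1r addrA addrAC.
have := f_cvx y x h; rewrite (ltW h0) (ltW h1) => /(_ isT) chord.
rewrite /= [h%:A]mulr1 addr0 scale0r add0r chordE ler_pdivrMl //; lra.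
Unshelve. all: by end_near.
Qed.

Lemma smooth_descent_le L : lipschitz_grad g L ->
  forall x v, f (v + x) <= f x + dotv (g x) v + L / 2 * sqnorm v.
Proof.
move=> g_lip x v.
set a := dotv (g x) v; set b := L / 2 * sqnorm v.
pose phi s := f (s *: v + x).
pose p := a \*: @id R + b \*: (@id R) ^+ 2.
pose psi := phi - p.
have psi_der s : is_derive s (1 : R) psi
    (dotv (g (s *: v + x)) v - (a + b * (2 * s))).
  apply: is_deriveB; first exact: is_derive_line.
  apply: is_derive_eq; rewrite /GRing.scale /=; lra.
have psi_cont : {within `[0, 1], continuous psi}.
  apply: continuous_subspaceT => s; apply/differentiable_continuous/derivable1_diffP.
  by have [] := psi_der s.
have [c /[!in_itv] /= /andP[c0 _] psiE] := MVT ltr01 (fun s _ => psi_der s) psi_cont.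
have slope_le0 : dotv (g (c *: v + x)) v - (a + b * (2 * c)) <= 0.
  rewrite opprD addrA -dotvBl subr_le0 /b.
  apply: (le_trans (dotv_le_enorm _ _)).
  have := g_lip (c *: v + x) x; rewrite addrK enormZ ?(ltW c0) // => lip.
  apply: (le_trans (ler_wpM2r (enorm_ge0 v) lip)).
  by rewrite -sqr_enorm (_ : L / 2 * _ * _ = L * (c * enorm v) * enorm v) //; field.
move: slope_le0; rewrite subr0 mulr1 in psiE; rewrite -psiE.
change (f (1 *: v + x) - (a * 1 + b * 1 ^+ 2)
  - (f (0 *: v + x) - (a * 0 + b * 0 ^+ 2)) <= 0 -> f (v + x) <= f x + a + b).
rewrite scale1r scale0r add0r expr1n expr0n /=; lra.
Qed.

End SmoothConvex.

Section PolyakStep.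
Variables (R : realType) (d : nat).
Implicit Types (x y gr : 'rV[R]_d).

Lemma polyak_ratio_ge (f : 'rV[R]_d -> R) x gr Lt lb : 0 < Lt ->
  (forall v, f (v + x) <= f x + dotv gr v + Lt / 2 * sqnorm v) ->
  (forall y, lb <= f y) -> gr != 0 ->
  (2 * Lt)^-1 <= (f x - lb) / sqnorm gr.
Proof.
move=> Lt0 descent lb_le gr0; have gr_gt0 : 0 < sqnorm gr by rewrite sqnorm_gt0.
(* a gradient step of length 1 / Lt cannot go below [lb] *)
have := le_trans (lb_le _) (descent (- Lt^-1 *: gr)).
rewrite dotvZr sqnormZ -/(sqnorm gr).
have -> : Lt / 2 * ((- Lt^-1) ^+ 2 * sqnorm gr) = Lt^-1 / 2 * sqnorm gr.
  by field; rewrite gt_eqF.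
rewrite ler_pdivlMr // invfM; lra.
Qed.

Lemma sgd_step_sqdist x xs gr (fx fxs lb c gam : R) : 0 <= gam ->
  fx + dotv gr (xs - x) <= fxs -> gam * sqnorm gr <= (fx - lb) / c ->
  gam * ((2 - c^-1) * (fx - fxs) - (fxs - lb) / c)
    <= sqnorm (x - xs) - sqnorm (x - gam *: gr - xs).
Proof.
move=> gam0 cvx polyak.
rewrite [x - _ - xs]addrAC [sqnorm (x - xs - _)]sqnormB sqnormZ dotvZr dotvC dotvBr.
rewrite dotvBr in cvx.
have lin : 0 <= gam * (fxs - fx - (dotv gr xs - dotv gr x)).
  by rewrite mulr_ge0 ?subr_ge0 //; lra.
have quad : 0 <= gam * ((fx - lb) / c - gam * sqnorm gr) by rewrite mulr_ge0 ?subr_ge0.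
lra.
Qed.

End PolyakStep.

Section Minibatch.
Variables (R : realType) (d n : nat).
Variables (fs : 'I_n -> 'rV[R]_d -> R) (gs : 'I_n -> 'rV[R]_d -> 'rV[R]_d).
Variable L : 'I_n -> R.
Hypothesis fs_grad : forall i, is_gradient (fs i) (gs i).
Hypothesis gs_lip : forall i, lipschitz_grad (gs i) (L i).
Implicit Types (S : {set 'I_n}) (x y v : 'rV[R]_d).

Lemma dotv_gS S x v : dotv (gS gs S x) v = #|S|%:R^-1 * \sum_(i in S) dotv (gs i x) v.
Proof. by rewrite dotvZl dotv_suml. Qed.

Lemma fS_convex_gradient_le S x y : (forall i, convex_fun (fs i)) ->
  fS fs S x + dotv (gS gs S x) (y - x) <= fS fs S y.
Proof.
move=> fs_cvx; rewrite dotv_gS /fS -mulrDr ler_wpM2l ?invr_ge0 // -big_split.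
by apply: ler_sum => i _; apply: convex_gradient_le.
Qed.

Lemma fS_descent_le Lt S x v : 0 <= Lt -> (forall i, L i <= Lt) ->
  fS fs S (v + x) <= fS fs S x + dotv (gS gs S x) v + Lt / 2 * sqnorm v.
Proof.
move=> Lt0 L_le; rewrite dotv_gS /fS.
have [S0|S0] := eqVneq #|S| 0%N.
  by rewrite S0 invr0 !mul0r !add0r mulr_ge0 ?divr_ge0 ?sqnorm_ge0.
rewrite -mulrDr -[Lt / 2 * _](mulKf (_ : #|S|%:R != 0 :> R)) ?pnatr_eq0 //.
rewrite -mulrDr ler_wpM2l ?invr_ge0 // mulr_natl -sumr_const -!big_split.
apply: ler_sum => i _; apply: le_trans (smooth_descent_le (fs_grad i) (gs_lip i) x v) _.
by rewrite lerD2l ler_wpM2r ?sqnorm_ge0 // ler_pM2r ?invr_gt0.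
Qed.

End Minibatch.

Lemma telescope_le (R : realFieldType) (a gam h : nat -> R) (D : R) (K : nat) :
  (forall k, 0 < gam k) -> (forall k, gam k.+1 <= gam k) ->
  (forall k, gam k * h k <= a k - a k.+1) -> (forall k, (k <= K)%N -> a k <= D) ->
  \sum_(k < K.+1) h k <= (D - a K.+1) / gam K.
Proof.
move=> gam_gt0 gam_le step; elim: K => [|K IH] aD.
  rewrite big_ord1 ler_pdivlMr // mulrC; apply: le_trans (step 0) _.
  by rewrite lerD2r aD.
rewrite big_ord_recr /=.
have h_le : h K.+1 <= (a K.+1 - a K.+2) / gam K.+1 by rewrite ler_pdivlMr // mulrC.
have sum_le := IH (fun k kK => aD k (leqW kK)).
have inv_le : (gam K)^-1 <= (gam K.+1)^-1 by rewrite lef_pV2 ?posrE.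
have := ler_wpM2l (_ : 0 <= D - a K.+1) inv_le; rewrite subr_ge0 aD // => /(_ isT).
rewrite !mulrBl in sum_le h_le *; lra.
Qed.

Section DecSPSStep.
Variables (R : realType) (d n : nat).
Variables (fs : 'I_n -> 'rV[R]_d -> R) (gs : 'I_n -> 'rV[R]_d -> 'rV[R]_d).
Variables (lstar : {set 'I_n} -> R) (c : nat -> R).
Hypothesis c_gt0 : forall k, 0 < c k.
Variables (k : nat) (S : {set 'I_n}) (st : 'rV[R]_d * R).
Local Notation st' := (decsps_step fs gs lstar c k S st).
Local Notation gr := (gS gs S st.1).

Lemma decsps_stepE : st'.1 = st.1 - st'.2 *: gr.
Proof. by rewrite /decsps_step; case: eqP => [->|] /=; rewrite ?scaler0 ?subr0. Qed.

Lemma decsps_step_le : c k * st'.2 <= c k.-1 * st.2.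
Proof. by rewrite /decsps_step; case: eqP => _ /=; rewrite mulVKf ?gt_eqF ?ge_min ?lexx ?orbT. Qed.

Lemma decsps_step_polyak : lstar S <= fS fs S st.1 ->
  st'.2 * sqnorm gr <= (fS fs S st.1 - lstar S) / c k.
Proof.
move=> lb_le; rewrite /decsps_step; case: eqP => [->|gr0] /=.
  by rewrite /sqnorm dotv0l mulr0 divr_ge0 ?subr_ge0 // ltW.
apply: (@le_trans _ _ ((c k)^-1 * ((fS fs S st.1 - lstar S) / sqnorm gr) * sqnorm gr)).
  by rewrite ler_wpM2r ?sqnorm_ge0 // ler_wpM2l ?invr_ge0 ?(ltW (c_gt0 k)) // ge_min lexx.
rewrite -mulrA divfK; first by rewrite mulrC.
by rewrite sqnorm_eq0; apply/eqP.
Qed.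

Lemma decsps_step_ge Lt : 0 < Lt ->
  (forall v, fS fs S (v + st.1) <= fS fs S st.1 + dotv gr v + Lt / 2 * sqnorm v) ->
  (forall y, lstar S <= fS fs S y) ->
  (2 * Lt)^-1 <= c k.-1 * st.2 -> (2 * Lt)^-1 <= c k * st'.2.
Proof.
move=> Lt0 descent lb_le prev; rewrite /decsps_step.
case: eqP => [_|gr0] /=; rewrite mulVKf ?gt_eqF // le_min prev andbT.
by apply: polyak_ratio_ge => //; apply/eqP.
Qed.

End DecSPSStep.

Definition decsps_gain (R : realType) (d n : nat) (fs : 'I_n -> 'rV[R]_d -> R)
    (lstar : {set 'I_n} -> R) (c : nat -> R) (xs : 'rV[R]_d) (k : nat)
    (S : {set 'I_n}) (x : 'rV[R]_d) : R :=
  (2 - (c k)^-1) * (fS fs S x - fS fs S xs) - (fS fs S xs - lstar S) / c k.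

Section DecSPSRun.
Variables (R : realType) (d n : nat).
Variables (fs : 'I_n -> 'rV[R]_d -> R) (gs : 'I_n -> 'rV[R]_d -> 'rV[R]_d).
Variables (L : 'I_n -> R) (lstar : {set 'I_n} -> R) (c : nat -> R).
Variables (gamma_b Lt : R) (x0 xs : 'rV[R]_d) (w : nat -> {set 'I_n}).
Hypothesis fs_grad : forall i, is_gradient (fs i) (gs i).
Hypothesis fs_cvx : forall i, convex_fun (fs i).
Hypothesis gs_lip : forall i, lipschitz_grad (gs i) (L i).
Hypothesis lstar_le : forall S x, lstar S <= fS fs S x.
Hypothesis c_ge1 : forall k, 1 <= c k.
Hypothesis c_mono : forall k, c k <= c k.+1.
Hypothesis Lt_gt0 : 0 < Lt.
Hypothesis L_le : forall i, L i <= Lt.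
Hypothesis gamma_b_ge : (2 * Lt)^-1 <= c 0 * gamma_b.

Local Notation st := (decsps_state fs gs lstar c gamma_b x0 w).
Local Notation gain := (decsps_gain fs lstar c xs).

Let c_gt0 k : 0 < c k. Proof. exact: lt_le_trans ltr01 (c_ge1 k). Qed.

Lemma decsps_stepsize_ge k : (2 * Lt)^-1 <= c k.-1 * (st k).2.
Proof.
elim: k => [//|k IH]; apply: decsps_step_ge => // v.
exact: fS_descent_le (ltW Lt_gt0) L_le.
Qed.

Lemma decsps_stepsize_gt0 k : 0 < (st k).2.
Proof.
have lb_gt0 : 0 < (2 * Lt)^-1 by rewrite invr_gt0 mulr_gt0.
by have := lt_le_trans lb_gt0 (decsps_stepsize_ge k); rewrite pmulr_rgt0.
Qed.

Lemma decsps_stepsize_nonincr k : (st k.+1).2 <= (st k).2.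
Proof.
have step_le : c k * (st k.+1).2 <= c k.-1 * (st k).2 by exact: decsps_step_le.
rewrite -(ler_pM2l (c_gt0 k)); apply: le_trans step_le _.
rewrite ler_wpM2r ?(ltW (decsps_stepsize_gt0 k)) //.
by case: k => [|k]; [exact: lexx | exact: c_mono].
Qed.

Lemma decsps_state_sqdist k :
  (st k.+1).2 * gain k (w k) (st k).1
    <= sqnorm ((st k).1 - xs) - sqnorm ((st k.+1).1 - xs).
Proof.
rewrite [(st k.+1).1]decsps_stepE; apply: sgd_step_sqdist.
- exact: ltW (decsps_stepsize_gt0 k.+1).
- exact: fS_convex_gradient_le.
- exact: decsps_step_polyak.
Qed.

Lemma decsps_gain_sum_le K : (0 < K)%N ->
  \sum_(k < K) gain k (w k) (decsps_iter fs gs lstar c gamma_b x0 w k)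
    <= 2 * c K.-1 * Lt
       * \big[Num.max/0]_(k < K) sqnorm (decsps_iter fs gs lstar c gamma_b x0 w k - xs).
Proof.
case: K => // K _ /=.
set D := \big[Num.max/0]_(k < K.+1) _.
have D_ge k : (k <= K)%N -> sqnorm ((st k).1 - xs) <= D.
  move=> kK.
  exact: (le_bigmax 0 (fun k : 'I_K.+1 => sqnorm ((st k).1 - xs)) (@Ordinal K.+1 k kK)).
apply: le_trans (telescope_le (fun k => decsps_stepsize_gt0 k.+1)
  (fun k => decsps_stepsize_nonincr k.+1) decsps_state_sqdist D_ge) _.
have D0 : 0 <= D := le_trans (sqnorm_ge0 _) (D_ge 0%N isT).
have gam_gt0 := decsps_stepsize_gt0 K.+1.
have inv_le : (st K.+1).2^-1 <= 2 * Lt * c K.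
  have := ler_wpM2l (ltW (_ : 0 < 2 * Lt)) (decsps_stepsize_ge K.+1).
  rewrite mulfV ?gt_eqF ?mulr_gt0 // mulrA => /(_ isT) one_le.
  by rewrite -(ler_pM2r gam_gt0) mulVf ?gt_eqF.
apply: le_trans (ler_wpM2r (ltW (_ : 0 < _)) (_ : D - _ <= D)) _.
- by rewrite invr_gt0.
- by rewrite lerBlDr lerDl sqnorm_ge0.
by rewrite [X in _ <= X]mulrC; apply: ler_wpM2l; rewrite // mulrAC.
Qed.

End DecSPSRun.

Section UniformMean.
Variables (R : realFieldType) (T : finType) (P : pred T).
Implicit Types (X Y : T -> R) (a : R).

Definition unif_mean X : R := (\sum_(t | P t) X t) / #|[pred t | P t]|%:R.

Lemma ler_unif_mean X Y : (forall t, P t -> X t <= Y t) -> unif_mean X <= unif_mean Y.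
Proof. by move=> XY; rewrite ler_wpM2r ?invr_ge0 // ler_sum. Qed.

Lemma unif_meanD X Y : unif_mean (fun t => X t + Y t) = unif_mean X + unif_mean Y.
Proof. by rewrite /unif_mean big_split mulrDl. Qed.

Lemma unif_meanB X Y : unif_mean (fun t => X t - Y t) = unif_mean X - unif_mean Y.
Proof. by rewrite /unif_mean sumrB mulrBl. Qed.

Lemma unif_meanZ a X : unif_mean (fun t => a * X t) = a * unif_mean X.
Proof. by rewrite /unif_mean -mulr_sumr mulrA. Qed.

Lemma unif_meanMr a X : unif_mean (fun t => X t * a) = unif_mean X * a.
Proof. by rewrite /unif_mean -mulr_suml mulrAC. Qed.

Lemma unif_mean_sum (I : finType) (X : I -> T -> R) :
  unif_mean (fun t => \sum_i X i t) = \sum_i unif_mean (X i).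
Proof. by rewrite /unif_mean exchange_big mulr_suml. Qed.

Lemma unif_mean_cst a : (0 < #|[pred t | P t]|)%N -> unif_mean (fun _ => a) = a.
Proof.
move=> P0; rewrite /unif_mean sumr_const -[a *+ _]mulr_natr.
by rewrite (@eq_card _ P [pred t | P t]) // mulfK // pnatr_eq0 -lt0n.
Qed.

End UniformMean.

Section BatchSampling.
Variables (R : realType) (n B : nat).
Local Notation batches := [pred S : {set 'I_n} | batch_ok B S].

Lemma E_batchE (X : {set 'I_n} -> R) : E_batch B X = unif_mean (@batch_ok n B) X.
Proof. by []. Qed.

Lemma card_batches_gt0 : (B <= n)%N -> (0 < #|batches|)%N.
Proof.
move=> Bn.
have : (0 < #|[set S : {set 'I_n} | #|S| == B]|)%N by rewrite card_draws card_ord bin_gt0.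
by rewrite cardsE.
Qed.

Lemma sum_batches_mem i j :
  \sum_(S : {set 'I_n} | batch_ok B S) ((i \in S)%:R : R) =
  \sum_(S : {set 'I_n} | batch_ok B S) (j \in S)%:R.
Proof.
have tpermS_inj := imset_inj (@perm_inj _ (tperm i j)).
rewrite (reindex_inj tpermS_inj); apply: eq_big => [S | S _].
  by rewrite /batch_ok card_imset //; exact: perm_inj.
by rewrite -{1}(tpermR i j) mem_imset //; exact: perm_inj.
Qed.

Lemma sum_batches_memE i : (0 < n)%N ->
  \sum_(S : {set 'I_n} | batch_ok B S) ((i \in S)%:R : R) = #|batches|%:R * B%:R / n%:R.
Proof.
move=> n0.
have sumE : \sum_j \sum_(S : {set 'I_n} | batch_ok B S) ((j \in S)%:R : R) = #|batches|%:R * B%:R.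
  rewrite exchange_big /= [RHS]mulr_natl -[B%:R *+ _]sumr_const.
  apply: eq_bigr => S /eqP <-; rewrite -sum1_card natr_sum [RHS]big_mkcond.
  by apply: eq_bigr => j _; case: (j \in S).
move: sumE; rewrite (eq_bigr _ (fun j _ => sum_batches_mem j i)) sumr_const card_ord => <-.
by rewrite -[_ *+ n]mulr_natr mulfK // pnatr_eq0 -lt0n.
Qed.

Lemma E_batch_fS d (fs : 'I_n -> 'rV[R]_d -> R) y : (0 < B)%N -> (B <= n)%N ->
  E_batch B (fun S => fS fs S y) = favg fs y.
Proof.
move=> B0 Bn; have n0 : (0 < n)%N := leq_trans B0 Bn.
have Nb0 : (#|batches|%:R : R) != 0 by rewrite pnatr_eq0 -lt0n card_batches_gt0.
have fSE S : batch_ok B S -> fS fs S y = \sum_i B%:R^-1 * ((i \in S)%:R * fs i y).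
  move=> /eqP SB; rewrite /fS SB -mulr_sumr big_mkcond /=; congr (_ * _).
  by apply: eq_bigr => i _; case: (i \in S); rewrite ?mul1r ?mul0r.
rewrite /E_batch (eq_bigr _ fSE) exchange_big /=.
under eq_bigr do rewrite -mulr_sumr -mulr_suml sum_batches_memE //.
rewrite -mulr_sumr -mulr_sumr /favg; field.
by rewrite Nb0 !pnatr_eq0 -!lt0n B0 n0.
Qed.

Lemma E_batch_gain d (fs : 'I_n -> 'rV[R]_d -> R) lstar c xs k y :
  (0 < B)%N -> (B <= n)%N ->
  E_batch B (fun S => decsps_gain fs lstar c xs k S y)
    = (2 - (c k)^-1) * (favg fs y - favg fs xs) - (favg fs xs - E_batch B lstar) / c k.
Proof.
move=> B0 Bn; rewrite E_batchE /decsps_gain unif_meanB unif_meanZ unif_meanMr !unif_meanB.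
by rewrite -!E_batchE !E_batch_fS // unif_mean_cst ?card_batches_gt0.
Qed.

End BatchSampling.

Section TupleResampling.
Variables (R : realType) (n B K : nat).
Local Notation T := {set 'I_n}.
Implicit Types (t : K.-tuple T) (k : 'I_K) (S : T).

Definition tuple_set t k S : K.-tuple T :=
  [tuple if i == k then S else tnth t i | i < K].

Lemma tnth_tuple_set t k S i : tnth (tuple_set t k S) i = if i == k then S else tnth t i.
Proof. exact: tnth_mktuple. Qed.

Lemma tuple_setK t k S : tuple_set (tuple_set t k S) k (tnth t k) = t.
Proof.
by apply: eq_from_tnth => i; rewrite !tnth_tuple_set; case: eqVneq => [->|].
Qed.

Lemma E_seqE (X : K.-tuple T -> R) : E_seq B X = unif_mean (@batch_seq_ok n B K) X.
Proof. by []. Qed.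

Lemma card_batch_seqs_gt0 :
  (B <= n)%N -> (0 < #|[pred t : K.-tuple T | batch_seq_ok B t]|)%N.
Proof.
move=> Bn; have /card_gt0P [S] := card_batches_gt0 Bn; rewrite inE => ok_S.
by apply/card_gt0P; exists [tuple of nseq K S]; rewrite inE /batch_seq_ok all_nseq ok_S orbT.
Qed.

Lemma batch_seq_okE t : batch_seq_ok B t = [forall i, batch_ok B (tnth t i)].
Proof. exact/all_tnthP/forallP. Qed.

Lemma batch_seq_ok_tuple_set t k S :
  batch_seq_ok B (tuple_set t k S) && batch_ok B (tnth t k)
    = batch_seq_ok B t && batch_ok B S.
Proof.
rewrite !batch_seq_okE.
apply/andP/andP => -[/forallP ok_t ok_S]; split.
- apply/forallP => i; have := ok_t i; rewrite tnth_tuple_set.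
  by case: eqP => [-> _ | //].
- by have := ok_t k; rewrite tnth_tuple_set eqxx.
- by apply/forallP => i; rewrite tnth_tuple_set; case: eqP.
- exact: ok_t.
Qed.

Lemma E_seq_resample (H : K.-tuple T -> T -> R) k : (B <= n)%N ->
  (forall t S, H (tuple_set t k S) = H t) ->
  E_seq B (fun t => H t (tnth t k)) = E_seq B (fun t => E_batch B (H t)).
Proof.
move=> Bn H_indep.
(* [(t, S) |-> (t with S at k, t_k)] swaps the current and the resampled batch *)
have swapK : involutive (fun p : K.-tuple T * T => (tuple_set p.1 k p.2, tnth p.1 k)).
  by move=> [t S]; rewrite /= tnth_tuple_set eqxx tuple_setK.
have resampleE : \sum_(t | batch_seq_ok B t) \sum_(S : T | batch_ok B S) H t (tnth t k)
               = \sum_(t | batch_seq_ok B t) \sum_(S : T | batch_ok B S) H t S.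
  rewrite !pair_big_dep /= (reindex_inj (can_inj swapK)) /=.
  apply: eq_big => [[t S] | [t S] _] /=; first by rewrite batch_seq_ok_tuple_set.
  by rewrite H_indep tnth_tuple_set eqxx.
have Nb0 : (#|[pred S : T | batch_ok B S]|%:R : R) != 0.
  by rewrite pnatr_eq0 -lt0n card_batches_gt0.
rewrite /E_seq /E_batch; congr (_ / _).
rewrite -mulr_suml -resampleE mulr_suml; apply: eq_bigr => t _.
rewrite sumr_const -[_ *+ _]mulr_natr.
by rewrite (@eq_card _ _ [pred S : T | batch_ok B S]) // mulfK.
Qed.

End TupleResampling.

Lemma convex_fun_mean (R : realType) (d : nat) (f : 'rV[R]_d -> R)
    (y : nat -> 'rV[R]_d) K :
  convex_fun f -> (0 < K)%N ->
  f (K%:R^-1 *: \sum_(k < K) y k) <= K%:R^-1 * \sum_(k < K) f (y k).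
Proof.
move=> f_cvx; case: K => // K _; elim: K => [|K IH].
  by rewrite !big_ord1 invr1 scale1r mul1r.
set t := (K.+2%:R : R)^-1.
have t01 : 0 <= t <= 1 by rewrite invr_ge0 ler0n invf_le1 ?ltr0n // ler1n.
have wE : (1 - t) * K.+1%:R^-1 = t.
  have K0 : (0 : R) <= K%:R := ler0n _ _.
  by rewrite /t -addn1 natrD; field; rewrite !gt_eqF //; lra.
rewrite !(big_ord_recr K.+1) /= scalerDr mulrDr.
rewrite -[X in X *: \sum_(i < K.+1) _]wE -scalerA -[X in X * \sum_(i < K.+1) _]wE -mulrA.
rewrite addrC [X in _ <= X]addrC; apply: le_trans (f_cvx _ _ _ t01) _.
by rewrite lerD2l ler_wpM2l ?subr_ge0 ?(andP t01).2.
Qed.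

Lemma favg_convex (R : realType) (d n : nat) (fs : 'I_n -> 'rV[R]_d -> R) :
  (forall i, convex_fun (fs i)) -> convex_fun (favg fs).
Proof.
move=> fs_cvx x y t t01; rewrite /favg mulrCA (mulrCA (1 - t)) -mulrDr.
rewrite ler_wpM2l ?invr_ge0 // !mulr_sumr -big_split.
by apply: ler_sum => i _; apply: fs_cvx.
Qed.

Lemma decsps_state_prefix (R : realType) (d n : nat) fs gs lstar c (gamma_b : R)
    (x0 : 'rV[R]_d) (w w' : nat -> {set 'I_n}) k :
  (forall j, (j < k)%N -> w j = w' j) ->
  decsps_state fs gs lstar c gamma_b x0 w k = decsps_state fs gs lstar c gamma_b x0 w' k.
Proof.
elim: k => [//|k IH] ww' /=.
by rewrite ww' // IH // => j jk; apply: ww'; rewrite ltnS ltnW.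
Qed.

Section ExpectedGap.
Variables (R : realType) (d n : nat).
Variables (fs : 'I_n -> 'rV[R]_d -> R) (gs : 'I_n -> 'rV[R]_d -> 'rV[R]_d).
Variables (L : 'I_n -> R) (lstar : {set 'I_n} -> R) (xs x0 : 'rV[R]_d).
Variables (B : nat) (c : nat -> R) (gamma_b Lt : R) (K : nat).
Hypothesis B_gt0 : (0 < B)%N.
Hypothesis B_le : (B <= n)%N.
Hypothesis fs_grad : forall i, is_gradient (fs i) (gs i).
Hypothesis fs_cvx : forall i, convex_fun (fs i).
Hypothesis gs_lip : forall i, lipschitz_grad (gs i) (L i).
Hypothesis lstar_le : forall S x, lstar S <= fS fs S x.
Hypothesis xs_min : forall x, favg fs xs <= favg fs x.
Hypothesis c_ge1 : forall k, 1 <= c k.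
Hypothesis c_mono : forall k, c k <= c k.+1.
Hypothesis Lt_gt0 : 0 < Lt.
Hypothesis L_le : forall i, L i <= Lt.
Hypothesis gamma_b_ge : (2 * Lt)^-1 <= c 0 * gamma_b.
Hypothesis K_gt0 : (0 < K)%N.

Local Notation x t k :=
  (decsps_iter fs gs lstar c gamma_b x0 (@seq_of_tuple n K t) k).
Local Notation gain := (decsps_gain fs lstar c xs).
Local Notation sigma2 := (favg fs xs - E_batch B lstar).

Lemma decsps_iter_tuple_set t (k : 'I_K) S : x (tuple_set t k S) k = x t k.
Proof.
congr (_.1); apply: decsps_state_prefix => j jk.
have jK : (j < K)%N := ltn_trans jk (ltn_ord k).
rewrite /seq_of_tuple -[j]/(nat_of_ord (Ordinal jK)) -!tnth_nth tnth_tuple_set.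
by rewrite -val_eqE /= ltn_eqF.
Qed.

Lemma E_seq_gap_le (k : 'I_K) :
  E_seq B (fun t => favg fs (x t k) - favg fs xs)
    <= E_seq B (fun t => gain k (tnth t k) (x t k)) + sigma2 / c k.
Proof.
have ck_gt0 : 0 < c k := lt_le_trans ltr01 (c_ge1 k).
rewrite (E_seq_resample (H := fun t S => gain k S (x t k))) => [|//|t S]; last first.
  by rewrite decsps_iter_tuple_set.
have seqs_gt0 := card_batch_seqs_gt0 K B_le.
rewrite E_seqE -[sigma2 / c k](unif_mean_cst (P := @batch_seq_ok n B K) _ seqs_gt0).
rewrite -unif_meanD.
apply: ler_unif_mean => t _; rewrite E_batch_gain // subrK.
have gap_ge0 : 0 <= favg fs (x t k) - favg fs xs by rewrite subr_ge0.
have : 0 <= (1 - (c k)^-1) * (favg fs (x t k) - favg fs xs).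
  by rewrite mulr_ge0 // subr_ge0 invf_le1.
lra.
Qed.

Lemma E_seq_gain_sum_le :
  \sum_(k < K) E_seq B (fun t => gain k (tnth t k) (x t k))
    <= 2 * c K.-1 * Lt * E_seq B (fun t => \big[Num.max/0]_(k < K) sqnorm (x t k - xs)).
Proof.
rewrite !E_seqE -unif_mean_sum -unif_meanZ; apply: ler_unif_mean => t _.
under eq_bigr do rewrite (tnth_nth (finset.set0 : {set 'I_n})).
exact: (decsps_gain_sum_le x0 xs (seq_of_tuple t) fs_grad fs_cvx gs_lip lstar_le
  c_ge1 c_mono Lt_gt0 L_le gamma_b_ge K_gt0).
Qed.

Lemma decsps_expected_gap_le :
  E_seq B (fun t => favg fs (K%:R^-1 *: \sum_(k < K) x t k) - favg fs xs)
    <= 2 * c K.-1 * Lt * E_seq B (fun t => \big[Num.max/0]_(k < K) sqnorm (x t k - xs))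
       / K%:R + K%:R^-1 * \sum_(k < K) sigma2 / c k.
Proof.
have K_neq0 : (K%:R : R) != 0 by rewrite pnatr_eq0 -lt0n.
have jensen t : favg fs (K%:R^-1 *: \sum_(k < K) x t k) - favg fs xs
    <= K%:R^-1 * \sum_(k < K) (favg fs (x t k) - favg fs xs).
  rewrite sumrB sumr_const card_ord -[favg fs xs *+ K]mulr_natl mulrBr mulKf // lerD2r.
  exact: convex_fun_mean (favg_convex fs_cvx) K_gt0.
rewrite E_seqE; apply: le_trans (ler_unif_mean (fun t _ => jensen t)) _.
rewrite unif_meanZ unif_mean_sum [_ / K%:R]mulrC -mulrDr ler_wpM2l ?invr_ge0 //.
apply: le_trans (ler_sum _ (fun k _ => E_seq_gap_le k)) _.
by rewrite big_split lerD2r E_seq_gain_sum_le.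
Qed.

End ExpectedGap.

Theorem theorem3 (R : realType) (d n : nat)
  (fs : 'I_n -> 'rV[R]_d -> R) (gs : 'I_n -> 'rV[R]_d -> 'rV[R]_d)
  (L : 'I_n -> R) (lstar : {set 'I_n} -> R) (xstar x0 : 'rV[R]_d)
  (B : nat) (c : nat -> R) (gamma_b : R) (K : nat) :
  (0 < n)%N -> (0 < B)%N -> (B <= n)%N ->
  (forall i, is_gradient (fs i) (gs i)) ->
  (forall i, convex_fun (fs i)) ->
  (forall i, lipschitz_grad (gs i) (L i)) ->
  (forall i, lower_bounded (fs i)) ->
  (forall S : {set 'I_n}, forall x, lstar S <= fS fs S x) ->
  (forall x, favg fs xstar <= favg fs x) ->
  0 < gamma_b ->
  (forall k, 1 <= c k) ->
  (forall k, c k <= c k.+1) ->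
  (1 <= K)%N ->
  let x := fun (t : K.-tuple {set 'I_n}) (k : nat) =>
             decsps_iter fs gs lstar c gamma_b x0 (seq_of_tuple t) k in
  let xbar := fun t => K%:R^-1 *: \sum_(k < K) x t k in
  let D2 := fun t => \big[Num.max/0]_(k < K) sqnorm (x t k - xstar) in
  let Lmax := \big[Num.max/0]_(i < n) L i in
  let Ltil := Num.max Lmax (1 / (2 * c 0%N * gamma_b)) in
  let sigma2 := favg fs xstar - E_batch B lstar in
  E_seq B (fun t => favg fs (xbar t) - favg fs xstar)
  <= 2 * c K.-1 * Ltil * E_seq B D2 / K%:R
     + K%:R^-1 * \sum_(k < K) sigma2 / c k.
Proof.
move=> _ B_gt0 B_le fs_grad fs_cvx gs_lip _ lstar_le xs_min gamma_b_gt0 c_ge1 c_mono K_gt0.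
pose Ltil := Num.max (\big[Num.max/0]_(i < n) L i) (1 / (2 * c 0%N * gamma_b)).
have c0_gt0 : 0 < c 0 := lt_le_trans ltr01 (c_ge1 0).
have Ltil_ge : (2 * c 0 * gamma_b)^-1 <= Ltil by rewrite -div1r le_max lexx orbT.
have Ltil_gt0 : 0 < Ltil.
  by apply: lt_le_trans Ltil_ge; rewrite invr_gt0 !mulr_gt0.
have L_le i : L i <= Ltil by rewrite le_max (le_bigmax 0 L i).
have gamma_b_ge : (2 * Ltil)^-1 <= c 0 * gamma_b.
  rewrite invf_ple ?posrE ?mulr_gt0 // invfM.
  by move: Ltil_ge; rewrite !invfM; lra.
exact: decsps_expected_gap_le.
Qed.
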